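(* Let $1\le k<\lfloor n/2\rfloor$. Then $$\operatorname{Hdepth}_1M(n,k)\le n-\left\lceil\frac{n-k}{k+1}\right\rceil.$$
   Context: $K$ is a field, $R=K[X_1,\dots,X_n]$ with the standard grading ($\deg X_i=1$). $M(n,k)$ is the $k$-th syzygy module of $K=R/(X_1,\dots,X_n)$ in the Koszul complex: the image of $\partial:\bigwedge^kR^n\to\bigwedge^{k-1}R^n$, $\partial(e_{i_1}\wedge\dots\wedge e_{i_k})=\sum_{r=1}^k(-1)^{r+1}X_{i_r}e_{i_1}\wedge\dots\widehat{e_{i_r}}\dots\wedge e_{i_k}$, where $e_{i_1}\wedge\dots\wedge e_{i_k}$ has degree $k$. A graded retract of $R$ is a $K$-subalgebra generated by a set of linear forms. A Hilbert decomposition of $M$ is a finite family $(S_i,s_i)$, $s_i\in\mathbb{Z}$, $S_i$ graded retracts, with $M\cong\bigoplus_iS_i(-s_i)$ as graded $K$-vector spaces; its depth is $\min_i\dim S_i$; $\operatorname{Hdepth}_1M$ is the maximal depth of such a decomposition. *)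

From HB Require Import structures.
From mathcomp Require Import all_boot all_order all_algebra.
From mathcomp Require Import mpoly.
Set Implicit Arguments. Unset Strict Implicit. Unset Printing Implicit Defensive.
Import Order.TTheory GRing.Theory Num.Theory.
Local Open Scope ring_scope.

Section Koszul.
Variables (K : fieldType) (n : nat).

(* Exponent vectors with all entries <= j; they contain all monomials of
   degree j.  Used as coordinate index for homogeneous polynomials of degree j. *)
Definition expo (j : nat) := {ffun 'I_n -> 'I_j.+1}.
Definition mono_of (j : nat) (e : expo j) : 'X_{1..n} :=
  [multinom (nat_of_ord (e i)) | i < n].

Definition monos (j : nat) : seq (expo j) :=
  filter (fun e : expo j => (\sum_(i < n) nat_of_ord (e i))%N == j) (enum {: expo j}).

(* Coordinates (coefficient vector) of a homogeneous polynomial of degree j;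
   this map is injective on homogeneous polynomials of degree j. *)
Definition pcoord (j : nat) (p : {mpoly K[n]}) : {ffun expo j -> K^o} :=
  [ffun e => p@_(mono_of e)].

(* Coordinates of an element of (/\^l R^n) whose coefficients (on the basis
   e_J, J ranging over l-subsets of {1..n}, J increasingly ordered)
   are homogeneous of degree j. *)
Definition wcoord (j : nat) (v : {ffun {set 'I_n} -> {mpoly K[n]}})
  : {ffun ({set 'I_n} * expo j) -> K^o} :=
  [ffun x => (v x.1)@_(mono_of x.2)].

Definition wbasis (j : nat) : seq ({set 'I_n} * expo j) :=
  enum [set: {set 'I_n} * expo j].

(* Koszul differential applied to  X^m e_I :
   d(e_{i_1} /\ ... /\ e_{i_k}) = sum_r (-1)^(r+1) X_{i_r} e_{I \ i_r};
   for i = i_r, r-1 = #{x in I | x < i}. *)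
Definition koszul_d (I : {set 'I_n}) (m : 'X_{1..n})
  : {ffun {set 'I_n} -> {mpoly K[n]}} :=
  [ffun J => \sum_(i in I | J == I :\ i)
      (-1) ^+ #|[set x in I | (x < i)%N]| *: ('X_i * 'X_[m])].

(* Hilbert function of M(n,k) = Im(d : /\^k R^n -> /\^(k-1) R^n) in degree d:
   (M(n,k))_d is spanned by the images of the K-basis X^m e_I (#|I| = k,
   deg m = d - k) of the degree-d component of /\^k R^n. *)
Definition hilbM (k : nat) (d : int) : nat :=
  match d with
  | Posz d' =>
      if (d' < k)%N then 0%N else
      \dim (<< [seq wcoord (d' - k)%N.+1 (koszul_d x.1 (mono_of x.2))
               | x <- [seq x : {set 'I_n} * expo (d' - k)%N <- wbasis (d' - k)%N
                        | (#|x.1| == k) && (x.2 \in monos (d' - k)%N)]] >>%VS)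
  | Negz _ => 0%N
  end.

Definition linform (l : 'rV[K]_n) : {mpoly K[n]} := \sum_(i < n) l 0 i *: 'X_i.

(* A graded retract K[l_1,...,l_t] of R, given by a finite list of linear
   forms generating it. *)
Definition retract := seq 'rV[K]_n.

(* Its degree-j component is spanned by the products of j generators. *)
Definition hilbS (S : retract) (j : int) : nat :=
  match j with
  | Posz j' =>
      \dim (<< [seq pcoord j' (\prod_(i < j') linform (nth 0 S (f i)))
               | f : {ffun 'I_j' -> 'I_(size S)} <- enum [set: {ffun 'I_j' -> 'I_(size S)}]] >>%VS)
  | Negz _ => 0%N
  end.

(* Krull dimension of K[l_1..l_t]: it is a polynomial ring in as many
   variables as the dimension of the span of the l_i. *)
Definition dimS (S : retract) : nat :=
  \dim (<< [seq (l : 'rV[K]_n) | l <- S] >>%VS).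

(* Hilbert decomposition of M(n,k): family (S_i, s_i) with
   M(n,k) ~= (+)_i S_i(-s_i) as graded K-vector spaces, i.e. equal
   dimension in every degree. *)
Definition hilb_decomp (k : nat) (D : seq (retract * int)) : Prop :=
  forall d : int, hilbM k d = (\sum_(x <- D) hilbS x.1 (d - x.2))%N.

(* Hdepth_1 M(n,k) <= b : every Hilbert decomposition has depth
   (= min_i dim S_i) at most b. *)
Definition Hdepth1_le (k b : nat) : Prop :=
  forall D, hilb_decomp k D -> exists2 x, x \in D & (dimS x.1 <= b)%N.

End Koszul.

Definition ceil_div (a b : nat) : nat := ((a + b).-1 %/ b)%N.

From HB Require Import structures.
From mathcomp Require Import all_boot all_order all_algebra.
From mathcomp Require Import mpoly zify.
Set Implicit Arguments. Unset Strict Implicit. Unset Printing Implicit Defensive.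
Import Order.TTheory GRing.Theory Num.Theory.
Local Open Scope ring_scope.

(* A graded retract S has dim S_0 = 1 and dim S_1 >= dim S.  Hence in a
   Hilbert decomposition of M = M(n,k) every shift is at least k, exactly
   dim M_k >= C(n,k) summands have shift k, and each of them contributes at
   least its depth to dim M_(k+1).  On the other hand M_(k+1) is spanned by the
   images d(X_i e_I), #|I| = k, and d^2 = 0 expresses those with i < min I
   through the others, so dim M_(k+1) <= n C(n,k) - C(n,k+1).  If all depths
   exceeded b = n - ceil((n-k)/(k+1)) we would get
   C(n,k) (b+1) <= n C(n,k) - C(n,k+1) = C(n,k) (n - (n-k)/(k+1)),
   contradicting the choice of b. *)

Section Retracts.
Variables (K : fieldType) (n : nat).
Implicit Type S : retract K n.

Definition expo_unit (i : 'I_n) : expo n 1 := [ffun l => inord (l == i)].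

Lemma mono_of_unit i : mono_of (expo_unit i) = U_(i)%MM.
Proof.
apply/mnmP => j; rewrite mnmE mnm1E ffunE inordK; last by case: (j == i).
by rewrite eq_sym.
Qed.

Lemma mono_of_expo0 (e : expo n 0) : mono_of e = 0%MM.
Proof. by apply/mnmP => j; rewrite mnmE mnm0E; case: (e j) => -[]. Qed.

Lemma hilbS_0 S : hilbS S (Posz 0) = 1%N.
Proof.
rewrite /hilbS; set L := map _ _.
have -> : L = [:: pcoord 0 (1 : {mpoly K[n]})].
  rewrite /L; under eq_map => f do rewrite big_ord0.
  have : size (enum [set: {ffun 'I_0 -> 'I_(size S)}]) = 1%N.
    by rewrite -cardE cardsT card_ffun !card_ord.
  by case: (enum _) => [|a [|]].
rewrite span_seq1 dim_vline; apply/eqP; rewrite eqb1.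
apply/eqP => /(congr1 (fun w : {ffun expo n 0 -> K^o} => w [ffun => ord0])).
by rewrite !ffunE mono_of_expo0 mcoeff1 eqxx => /eqP; rewrite oner_eq0.
Qed.

Definition row_of_deg1 (w : {ffun expo n 1 -> K^o}) : 'rV[K]_n :=
  \row_i w (expo_unit i).

Lemma row_of_deg1_is_linear : linear row_of_deg1.
Proof. by move=> a u v; apply/rowP => i; rewrite !mxE !ffunE. Qed.

HB.instance Definition _ :=
  GRing.isLinear.Build K _ _ _ row_of_deg1 row_of_deg1_is_linear.

Lemma linform_coef (l : 'rV[K]_n) i : (linform l)@_(U_(i)%MM) = l 0 i.
Proof.
rewrite /linform raddf_sum /= (bigD1 i) //= mcoeffZ mcoeffXU eqxx mulr1.
by rewrite big1 ?addr0 // => j /negbTE ji; rewrite mcoeffZ mcoeffXU ji mulr0.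
Qed.

Lemma row_of_linform (l : 'rV[K]_n) : row_of_deg1 (pcoord 1 (linform l)) = l.
Proof. by apply/rowP => i; rewrite mxE ffunE mono_of_unit linform_coef. Qed.

(* row_of_deg1 maps S_1 onto the span of the generators of S. *)
Lemma dimS_le_hilbS1 S : (dimS S <= hilbS S (Posz 1))%N.
Proof.
rewrite /hilbS /dimS map_id; set L := map _ _.
apply: (@leq_trans (\dim (linfun row_of_deg1 @: <<L>>)%VS)); last first.
  by rewrite -(limg_ker_dim (linfun row_of_deg1) <<L>>) leq_addl.
apply: dimvS; rewrite limg_span; apply/span_subvP => s sS.
apply: memv_span; apply/mapP.
have [i ilt si] : exists2 i, (i < size S)%N & s = S`_i.
  by exists (index s S); rewrite ?index_mem ?nth_index.
exists (pcoord 1 (linform s)); last by rewrite lfunE /= row_of_linform.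
apply/mapP; exists [ffun => Ordinal ilt]; first by rewrite mem_enum inE.
by rewrite big_ord1 ffunE /= si.
Qed.

Lemma hilbS_subz S (a b : nat) :
  hilbS S (Posz a - Posz b) = if (b <= a)%N then hilbS S (Posz (a - b)) else 0%N.
Proof.
case: leqP => ab; first by rewrite subzn.
suff -> : Posz a - Posz b = Negz (b - a).-1 by [].
by rewrite NegzE prednK ?subn_gt0 // -subzn ?(ltnW ab) // opprB.
Qed.

End Retracts.

Lemma free_map_pivot (K : fieldType) (T : finType) (A : eqType) (s : seq A)
    (h : A -> {ffun T -> K^o}) (pivot : A -> T) :
  uniq s -> (forall a b, a \in s -> b \in s -> (h b (pivot a) != 0) = (a == b)) ->
  free (map h s).
Proof.
elim: s => [|a s IH] /=; first by rewrite /free span_nil dimv0.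
move=> /andP [as_ us] hpiv; rewrite free_cons IH // ?andbT; last first.
  by move=> x y xs ys; apply: hpiv; rewrite inE ?xs ?ys orbT.
apply/negP => /(coord_span (X := in_tuple (map h s))).
move/(congr1 (fun w : {ffun T -> K^o} => w (pivot a))).
rewrite sum_ffunE big1 => [/eqP|i _]; first by apply/negP; rewrite hpiv ?inE ?eqxx.
rewrite ffunE /=; have /mapP [b bs ->] := mem_nth 0 (ltn_ord i).
have := hpiv a b; rewrite !inE eqxx bs orbT => /(_ isT isT).
have -> : (a == b) = false by apply: contraNF as_ => /eqP ->.
by move/negbFE/eqP ->; rewrite scaler0.
Qed.

Section KoszulDegreeK.
Variables (K : fieldType) (n : nat).

Lemma koszul_d0_coef_unit (I I' : {set 'I_n}) p : p \in I ->
  (koszul_d K I' 0%MM (I :\ p))@_(U_(p)%MM) =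
  if I' == I then (-1) ^+ #|[set x in I | (x < p)%N]| else 0.
Proof.
move=> pI; rewrite /koszul_d ffunE raddf_sum /=.
have [->|neq] := eqVneq I' I.
  rewrite (bigD1 p) /=; last by rewrite pI eqxx.
  rewrite mpolyX0 mulr1 mcoeffZ mcoeffXU eqxx mulr1 big1 ?addr0 // => i /andP [_ ip].
  by rewrite mcoeffZ mulr1 mcoeffXU (negbTE ip) mulr0.
apply: big1 => i /andP [iI' /eqP e].
rewrite mpolyX0 mulr1 mcoeffZ mcoeffXU; case: eqP => [ip|]; last by rewrite mulr0.
by case/eqP: neq; rewrite -(setD1K iI') -e ip setD1K.
Qed.

(* The d(e_I), #|I| = k, are free: for p in I, d(e_I) is the only d(e_J) with
   a nonzero coefficient on X_p e_(I :\ p). *)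
Lemma bin_le_hilbM k : (0 < k)%N -> (0 < n)%N -> ('C(n, k) <= hilbM K n k (Posz k))%N.
Proof.
move=> k_gt0 n_gt0; rewrite /hilbM ltnn subnn.
set s := [seq x <- wbasis n 0 | _].
set h := fun x : {set 'I_n} * expo n 0 => wcoord 1 (koszul_d K x.1 (mono_of x.2)).
pose p (I : {set 'I_n}) := odflt (Ordinal n_gt0) [pick i in I].
have pI x : x \in s -> p x.1 \in x.1.
  rewrite mem_filter => /andP [/andP [/eqP cx _] _].
  rewrite /p; case: pickP => [i //|/= noI].
  by move: k_gt0; rewrite -cx card_gt0 => /set0Pn [y yx]; move: (noI y); rewrite /= yx.
have /eqP -> : free (map h s).
  apply: (@free_map_pivot _ _ _ s h (fun x => (x.1 :\ p x.1, expo_unit (p x.1)))).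
    exact/filter_uniq/enum_uniq.
  move=> [A ea] [B eb] /pI Ap _.
  rewrite /h /wcoord ffunE /= mono_of_expo0 mono_of_unit koszul_d0_coef_unit //.
  have -> : ea = eb by apply/ffunP => i; apply/val_inj; case: (ea i) => -[]; case: (eb i) => -[].
  rewrite xpair_eqE eqxx andbT.
  by case: (eqVneq B A); rewrite ?eqxx // expf_neq0 // oppr_eq0 oner_eq0.
have monos0 (e : expo n 0) : e \in monos n 0.
  rewrite /monos mem_filter mem_enum andbT; apply/eqP; apply: big1 => i _.
  by case: (e i) => -[].
rewrite size_map; have -> : size s = #|setX [set I : {set 'I_n} | #|I| == k] [set: expo n 0]|.
  rewrite cardE /s /wbasis enum_setT /enum_mem; congr size.
  by apply: eq_filter => -[A e]; rewrite !inE monos0 !andbT.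
by rewrite cardsX card_draws cardsT card_ffun !card_ord exp1n muln1.
Qed.

End KoszulDegreeK.

Section KoszulSquare.
Variables (K : fieldType) (n : nat).

Definition rank_in (J : {set 'I_n}) (i : 'I_n) := #|[set y in J | (y < i)%N]|.

Lemma rank_inD1_lt (J : {set 'I_n}) (j i : 'I_n) :
  j \in J -> (j < i)%N -> rank_in J i = (rank_in (J :\ j) i).+1.
Proof.
move=> jJ ji; rewrite /rank_in.
have -> : [set y in J | (y < i)%N] = j |: [set y in J :\ j | (y < i)%N].
  by apply/setP => y; rewrite !inE; case: (eqVneq y j) => [->|] //=; rewrite jJ ji.
by rewrite cardsU1 !inE eqxx.
Qed.

Lemma rank_inD1_ge (J : {set 'I_n}) (j i : 'I_n) :
  (i <= j)%N -> rank_in (J :\ j) i = rank_in J i.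
Proof.
move=> ij; apply: eq_card => y; rewrite !inE.
by case: (eqVneq y j) => [->|] //=; rewrite ltnNge ij andbF.
Qed.

(* d(d(e_J)) = 0: the terms for the pairs (a, b) and (b, a) of J cancel. *)
Lemma koszul_dK (J : {set 'I_n}) :
  \sum_(j in J) (-1) ^+ rank_in J j *: koszul_d K (J :\ j) U_(j)%MM = 0.
Proof.
apply/ffunP => L; rewrite sum_ffunE ffunE.
under eq_bigr => j _ do rewrite ffunE /= ffunE scaler_sumr.
rewrite pair_big_dep /= (bigID (fun x : 'I_n * 'I_n => (x.1 < x.2)%N)) /=.
rewrite [X in _ + X](reindex_inj (h := fun x : 'I_n * 'I_n => (x.2, x.1))) /=;
  last by move=> [a b] [c d] [-> ->].
apply/eqP; rewrite addr_eq0 -sumrN; apply/eqP.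
apply: eq_big => [[a b]|[a b]] /=.
  have DD : J :\ a :\ b = J :\ b :\ a by rewrite setDDl setUC -setDDl.
  rewrite !inE DD; case: (ltngtP a b) => [ab|ba|/val_inj ab].
  - have ab' : a != b by apply: contraTneq ab => ->; rewrite ltnn.
    by rewrite ab' eq_sym ab' /=; case: (a \in J); case: (b \in J).
  - by rewrite !andbF.
  - by rewrite ab eqxx /= !andbF.
rewrite !inE => /andP [/andP [aJ _] ab].
rewrite -/(rank_in (J :\ a) b) -/(rank_in (J :\ b) a).
rewrite (rank_inD1_lt aJ ab) (rank_inD1_ge _ (ltnW ab)) exprS !scalerA.
by rewrite mulN1r mulNr scaleNr opprK mulrC [_ * 'X_a]mulrC.
Qed.

End KoszulSquare.

Section KoszulDegreeSucc.
Variables (K : fieldType) (n : nat).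

Lemma wcoord_sum j (r : seq 'I_n) (P : pred 'I_n) (c : 'I_n -> K)
    (v : 'I_n -> {ffun {set 'I_n} -> {mpoly K[n]}}) :
  wcoord j (\sum_(a <- r | P a) c a *: v a) = \sum_(a <- r | P a) c a *: wcoord j (v a).
Proof.
apply/ffunP => x; rewrite !ffunE !sum_ffunE raddf_sum; apply: eq_bigr => a _.
rewrite !ffunE; exact: mcoeffZ.
Qed.

Lemma wcoord0 j : wcoord j (0 : {ffun {set 'I_n} -> {mpoly K[n]}}) = 0.
Proof. by apply/ffunP => x; rewrite !ffunE mcoeff0. Qed.

Lemma monos1P (e : expo n 1) : e \in monos n 1 -> exists i, mono_of e = U_(i)%MM.
Proof.
rewrite /monos mem_filter mem_enum andbT => /sum_nat_eq1 [i [_ ei ej]].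
exists i; apply/mnmP => j; rewrite mnmE mnm1E.
by have [<-|ij] := eqVneq i j; rewrite ?ei // ej // eq_sym.
Qed.

Definition koszul_img (x : {set 'I_n} * 'I_n) := wcoord 2 (koszul_d K x.1 U_(x.2)%MM).

Definition least_ext (x : {set 'I_n} * 'I_n) :=
  (x.2 \notin x.1) && [forall y in x.1, (x.2 < y)%N].

Definition koszul_gens k := [set x : {set 'I_n} * 'I_n | (#|x.1| == k) && ~~ least_ext x].

(* If i < min I, then d(d(e_(i |: I))) = 0 expresses d(X_i e_I) through the
   d(X_j e_(i |: I :\ j)), j in I, none of which is a least extension. *)
Lemma koszul_img_span k (x : {set 'I_n} * 'I_n) :
  #|x.1| = k -> koszul_img x \in <<[seq koszul_img y | y <- enum (koszul_gens k)]>>%VS.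
Proof.
case: x => I i /= cI.
case E: (least_ext (I, i)); last first.
  by apply: memv_span; apply/mapP; exists (I, i); rewrite ?mem_enum ?inE /= ?cI ?eqxx ?E.
move: E => /andP [/= iI /forall_inP minI].
set J := i |: I.
have cJ : #|J| = k.+1 by rewrite cardsU1 iI cI.
have := koszul_dK K J; move/(congr1 (wcoord 2)); rewrite wcoord_sum wcoord0.
rewrite (bigD1 i) ?setU11 //=.
have -> : rank_in J i = 0%N.
  apply/eqP; rewrite cards_eq0; apply/eqP/setP => y; rewrite !inE.
  have [->|yi] := eqVneq y i; first by rewrite ltnn andbF.
  by case yI: (y \in I) => //=; rewrite ltnNge ltnW // minI.
rewrite expr0 scale1r setU1K // => /eqP; rewrite addr_eq0 => /eqP dI.
rewrite /koszul_img /= dI memvN; apply: memv_suml => j /andP [jJ ji]; apply: memvZ.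
apply: memv_span; apply/mapP; exists (J :\ j, j) => //.
have jI : j \in I by move: jJ; rewrite /J !inE (negbTE ji).
have cJ' : #|J :\ j| = k by move: cJ; rewrite (cardsD1 j) jJ add1n => -[].
rewrite mem_enum inE /= cJ' eqxx /=; apply/negP => /andP [_ /forall_inP minJ].
have : i \in J :\ j by rewrite /J !inE eqxx eq_sym ji.
by move/minJ; rewrite ltnNge ltnW // minI.
Qed.

Lemma hilbM_succ_le k : (hilbM K n k (Posz k.+1) <= #|koszul_gens k|)%N.
Proof.
rewrite /hilbM ltnNge leqnSn /= subSnn.
apply: (@leq_trans (\dim <<[seq koszul_img y | y <- enum (koszul_gens k)]>>)).
  apply: dimvS; apply/span_subvP => v /mapP [[I e]].
  rewrite mem_filter /= => /andP [/andP [/eqP cI /monos1P [i ->]] _] ->.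
  exact: (@koszul_img_span k (I, i)).
by apply: leq_trans (dim_span _) _; rewrite size_map -cardE.
Qed.

End KoszulDegreeSucc.

Section CountGenerators.
Variable n : nat.

(* (I, i) |-> i |: I is a bijection from the least extensions of k-sets onto
   the (k+1)-sets, with inverse J |-> (J :\ min J, min J). *)
Lemma card_least_ext k :
  #|[set x : {set 'I_n} * 'I_n | (#|x.1| == k) && least_ext x]| = 'C(n, k.+1).
Proof.
set E := [set x | _].
have ext_inj : {in E &, injective (fun x : {set 'I_n} * 'I_n => x.2 |: x.1)}.
  move=> [I i] [I' i']; rewrite !inE /= => /andP [_ /andP [iI /forall_inP minI]].
  move=> /andP [_ /andP [iI' /forall_inP minI']] /= eqJ.
  have ii' : i = i'.
    have : i \in i' |: I' by rewrite -eqJ setU11.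
    have : i' \in i |: I by rewrite eqJ setU11.
    rewrite !inE; case: eqP => [->|_] //= i'I; case: eqP => [->|_] //= iI'2.
    by have := ltn_trans (minI _ i'I) (minI' _ iI'2); rewrite ltnn.
  move: iI iI' eqJ => /= iI iI' eqJ; subst i'.
  by rewrite -(setU1K iI) eqJ setU1K.
rewrite -(card_in_imset ext_inj) -[n in 'C(n, _)]card_ord -card_draws.
apply: eq_card => J; rewrite inE; apply/imsetP/idP => [[[I i]]|/eqP cJ].
  by rewrite !inE /= => /andP [/eqP cI /andP [iI _]] ->; rewrite cardsU1 iI cI.
have [y0 y0J] : exists y, y \in J by apply/set0Pn; rewrite -card_gt0 cJ.
have [m mJ minJ] := @arg_minnP _ y0 (fun y => y \in J) val y0J.
exists (J :\ m, m); last by rewrite /= setD1K.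
have cJm : #|J :\ m| = k by move: cJ; rewrite (cardsD1 m) mJ add1n => -[].
rewrite !inE /= cJm eqxx /least_ext /= setD11 /=.
apply/forall_inP => y; rewrite !inE => /andP [ym yJ].
by rewrite ltn_neqAle minJ // andbT eq_sym.
Qed.

Lemma card_koszul_gens k : #|koszul_gens n k| = (n * 'C(n, k) - 'C(n, k.+1))%N.
Proof.
set A := [set x : {set 'I_n} * 'I_n | #|x.1| == k].
set E := [set x : {set 'I_n} * 'I_n | (#|x.1| == k) && least_ext x].
have -> : koszul_gens n k = A :\: E.
  by rewrite /koszul_gens; apply/setP => x; rewrite !inE /=; case: eqP; rewrite ?andbT.
rewrite cardsD (setIidPr _); last by apply/subsetP => x; rewrite !inE => /andP [].
rewrite card_least_ext (_ : A = setX [set I : {set 'I_n} | #|I| == k] [set: 'I_n]).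
  by rewrite cardsX card_draws cardsT !card_ord mulnC.
by apply/setP => -[I i]; rewrite !inE andbT.
Qed.

End CountGenerators.

Lemma ceil_div_succ_bound (n k C C' : nat) : (0 < C)%N -> (k < n)%N ->
  (k.+1 * C' = (n - k) * C)%N -> (n * C - C' < C * (n - ceil_div (n - k) k.+1).+1)%N.
Proof.
move=> C_gt0 kn eqC'; rewrite /ceil_div (_ : (n - k + k.+1).-1 = n)%N; last by lia.
by have := leq_divM n k.+1; move: (n %/ k.+1)%N => c cn; nia.
Qed.

Lemma leq_sum_mem (T : eqType) (s : seq T) (F : T -> nat) x :
  x \in s -> (F x <= \sum_(y <- s) F y)%N.
Proof. by move=> xs; rewrite (perm_big _ (perm_to_rem xs)) big_cons leq_addr. Qed.

Section HilbertDecomposition.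
Variables (K : fieldType) (n k : nat) (D : seq (retract K n * int)).
Hypothesis decD : hilb_decomp k D.

(* Every summand S(-s) contributes 1 to the Hilbert function of M in degree s. *)
Lemma hilb_decomp_shift_ge x : x \in D -> exists2 m : nat, x.2 = Posz m & (k <= m)%N.
Proof.
case: x => S s xD; have := leq_sum_mem (fun x => hilbS x.1 (s - x.2)) xD.
rewrite /= -decD subrr hilbS_0; case: s xD => [m _ hM|//].
by exists m => //; rewrite leqNgt; apply: contraTN hM => mk; rewrite /hilbM mk.
Qed.

Lemma hilbM_hilb_decomp_k :
  hilbM K n k (Posz k) = count (fun x : retract K n * int => x.2 == Posz k) D.
Proof.
rewrite decD -sum1_count [RHS]big_mkcond; apply: eq_big_seq => x xD /=.
have [m -> km] := hilb_decomp_shift_ge xD.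
rewrite hilbS_subz eqz_nat; case: leqP => mk.
  by rewrite (_ : m = k) ?subnn ?hilbS_0 ?eqxx //; apply/eqP; rewrite eqn_leq mk.
by rewrite gtn_eqF.
Qed.

Lemma hilb_decomp_depth_succ b : (forall x, x \in D -> b < dimS x.1)%N ->
  (count (fun x : retract K n * int => x.2 == Posz k) D * b.+1
     <= hilbM K n k (Posz k.+1))%N.
Proof.
move=> deep; rewrite decD -sum1_count big_distrl [leqLHS]big_mkcond /=.
rewrite big_seq [leqRHS]big_seq; apply: leq_sum => x xD.
have [m -> km] := hilb_decomp_shift_ge xD.
rewrite eqz_nat hilbS_subz; have [->|//] := eqVneq m k.
by rewrite leqnSn subSnn mul1n; apply: leq_trans (deep x xD) (dimS_le_hilbS1 _).
Qed.

End HilbertDecomposition.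

Theorem proposition3p6 (K : fieldType) (n k : nat) :
  (1 <= k)%N -> (k < n./2)%N ->
  Hdepth1_le K n k (n - ceil_div (n - k) k.+1).
Proof.
move=> k_gt0 kn2 D decD; have kn : (k < n)%N by move: kn2; rewrite -divn2; lia.
set b := (n - _)%N.
have [/allP deep|/allPn [x xD]] := boolP (all (fun x => b < dimS x.1)%N D); last first.
  by rewrite -leqNgt; exists x.
have binC := bin_le_hilbM K k_gt0 (ltn_trans k_gt0 kn).
rewrite (hilbM_hilb_decomp_k decD) in binC.
have C_gt0 : (0 < 'C(n, k))%N by rewrite bin_gt0 ltnW.
suff : ('C(n, k) * b.+1 <= n * 'C(n, k) - 'C(n, k.+1))%N.
  by rewrite leqNgt (ceil_div_succ_bound C_gt0 kn (mul_bin_left n k)).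
rewrite -card_koszul_gens; apply: leq_trans _ (hilbM_succ_le K n k).
apply: leq_trans _ (hilb_decomp_depth_succ decD deep).
by rewrite leq_mul2r binC orbT.
Qed.
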